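(* Let $Q$ be a finite, simple, commutative, automorphic loop of exponent $2$ which is not associative. Let $U$ be the socle of $\mathrm{Mlt}(Q)$, a regular normal elementary abelian $2$-subgroup, viewed as a $GF(2)$-vector space (written additively) on which $\mathrm{Inn}(Q)$ acts linearly by conjugation. For $x\in Q$ write $R_x=h_xu_x$ with unique $h_x\in\mathrm{Inn}(Q)$ and $u_x\in U$; for $u\in U$ let $h_u=h_x$ where $x$ is the unique element with $u_x=u$. Define $u\circ v=u^{h_v}+v$ on $U$. Then $\mathrm{Inn}(U,\circ)=\mathrm{Inn}(Q)=\langle h_x\mid x\in Q\rangle$ (where $\mathrm{Inn}(U,\circ)$ acts on $U$ and $\mathrm{Inn}(Q)$ is identified with its linear action on $U$).
   Context: A loop is a set with a binary operation in which left and right division are uniquely solvable and which has a neutral element $1$. $R_a:x\mapsto xa$; $\mathrm{Mlt}(Q)$ is generated by all left and right translations; $\mathrm{Inn}(Q)$ is the stabilizer of $1$ in $\mathrm{Mlt}(Q)$; $Q$ is automorphic if $\mathrm{Inn}(Q)\le\mathrm{Aut}(Q)$; exponent $2$ means $x^2=1$ for all $x$; simple means no nontrivial proper normal subloops. For such $Q$, $\mathrm{Mlt}(Q)$ is a primitive group of affine type, $\mathrm{Mlt}(Q)=\mathrm{Inn}(Q)U$ with $U\cap\mathrm{Inn}(Q)=1$, and $Q$ is identified with $U$ via $u\leftrightarrow 1u$; then the action of $h\in\mathrm{Inn}(Q)$ on points corresponds to $u\mapsto u^h=h^{-1}uh$, a $GF(2)$-linear map. Maps act on the right, composed left to right. The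 map $x\mapsto u_x$ is a bijection $Q\to U$, and $(U,\circ)$ is a loop isomorphic to $Q$. *)

From mathcomp Require Import all_boot all_fingroup all_solvable.
Set Implicit Arguments. Unset Strict Implicit. Unset Printing Implicit Defensive.

Local Open Scope group_scope.

Section Loops.
Variables (T : finType) (op : T -> T -> T) (e : T).

(* Left and right division uniquely solvable (on a finite set: translations
   are bijective) and e is a two-sided neutral element. *)
Definition is_loop : Prop :=
  [/\ forall x, op e x = x, forall x, op x e = x,
      forall a, injective (op a) & forall a, injective (fun x => op x a)].

Definition loop_comm : Prop := forall x y, op x y = op y x.
Definition loop_assoc : Prop := forall x y z, op x (op y z) = op (op x y) z.
Definition loop_exp2 : Prop := forall x, op x x = e.

(* Translations as permutations (maps act on the right; in MathComp
   (p * q) x = q (p x), i.e. composition left to right).  *)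
Definition Rp (a : T) : {perm T} :=
  odflt 1 [pick p : {perm T} | [forall x, p x == op x a]].
Definition Lp (a : T) : {perm T} :=
  odflt 1 [pick p : {perm T} | [forall x, p x == op a x]].

Definition Mlt : {set {perm T}} :=
  << [set Rp a | a : T] :|: [set Lp a | a : T] >>.
Definition Inn : {set {perm T}} := [set p in Mlt | p e == e].

Definition loop_automorphic : Prop :=
  forall p, p \in Inn -> forall x y, p (op x y) = op (p x) (p y).

Definition subloop (N : {set T}) : Prop :=
  [/\ e \in N,
      forall a b, a \in N -> b \in N -> op a b \in N,
      forall a b x, a \in N -> b \in N -> op a x = b -> x \in N &
      forall a b x, a \in N -> b \in N -> op x a = b -> x \in N].

Definition normal_subloop (N : {set T}) : Prop :=
  subloop N /\
  forall x y,
  [/\ [set op x n | n in N] = [set op n x | n in N],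
      [set op x (op y n) | n in N] = [set op (op x y) n | n in N] &
      [set op (op n x) y | n in N] = [set op n (op x y) | n in N]].

Definition loop_simple : Prop :=
  forall N, normal_subloop N -> N = [set e] \/ N = setT.

End Loops.

Definition socle (gT : finGroupType) (G : {set gT}) : {set gT} :=
  << \bigcup_(M : {group gT} | (M \subset G) && minnormal M G) M >>.

Section UDecomp.
Variables (T : finType) (op : T -> T -> T) (e : T) (U : {group {perm T}}).

Definition h_of (x : T) : {perm T} :=
  odflt 1 [pick h in Inn op e | [exists u in U, Rp op x == h * u]].
Definition u_of (x : T) : {perm T} :=
  odflt 1 [pick u in U | [exists h in Inn op e, Rp op x == h * u]].

Definition h_U (u : {perm T}) : {perm T} :=
  if [pick x | u_of x == u] is Some x then h_of x else 1.

(* u o v := u^{h_v} + v, the addition of U being the group product and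
   u ^ h = h^-1 * u * h the conjugation. *)
Definition opU (u v : subg_of U) : subg_of U :=
  subg U ((sgval u ^ h_U (sgval v)) * sgval v).

End UDecomp.

From Pilot Require Import Defs.
From mathcomp Require Import all_boot all_fingroup all_solvable.
Set Implicit Arguments. Unset Strict Implicit. Unset Printing Implicit Defensive.
Local Open Scope group_scope.

(* Since U is regular and normal in Mlt(Q), every R_x factors uniquely as
   h_x u_x with u_x the element of U sending 1 to x, and x |-> u_x is an
   isomorphism from Q onto (U, o), as (1 u_x) h_y u_y = x R_y = xy.
   Transporting Mlt and Inn along this isomorphism conjugates them, and on U
   the transported action of h in Inn(Q) is conjugation by h.  Finally
   Inn(Q) = <h_x>: by commutativity L_x = R_x, so Mlt(Q) = <h_x> U, and an
   element of Inn(Q) written as k u with k in <h_x>, u in U fixes 1, which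
   forces u = 1 by regularity. *)

Section Translations.
Variables (T : finType) (op : T -> T -> T) (e : T).

Lemma RpE_perm (p : {perm T}) a : (forall x, p x = op x a) -> Rp op a = p.
Proof.
move=> pE; rewrite /Rp; case: pickP => [q /forallP qE | /(_ p)/forallP[] x].
  by apply/permP => x; rewrite pE; apply/eqP.
by rewrite pE.
Qed.

Lemma LpE_perm (p : {perm T}) a : (forall x, p x = op a x) -> Lp op a = p.
Proof.
move=> pE; rewrite /Lp; case: pickP => [q /forallP qE | /(_ p)/forallP[] x].
  by apply/permP => x; rewrite pE; apply/eqP.
by rewrite pE.
Qed.

Lemma Inn_group_set : group_set (Inn op e).
Proof.
apply/group_setP; split; first by rewrite inE group1 perm1 eqxx.
move=> p q; rewrite !inE => /andP[Mp /eqP pe] /andP[Mq /eqP qe].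
by rewrite groupM // permM pe qe eqxx.
Qed.

Canonical Inn_group := Group Inn_group_set.

Lemma Rp_Mlt a : Rp op a \in Mlt op.
Proof. by rewrite mem_gen // inE imset_f. Qed.

Lemma Inn_sub_Mlt : Inn op e \subset Mlt op.
Proof. by apply/subsetP => p; rewrite inE => /andP[]. Qed.

Lemma Inn_fix p : p \in Inn op e -> p e = e.
Proof. by rewrite inE => /andP[_ /eqP]. Qed.

Hypothesis loopQ : is_loop op e.

Lemma RpE a x : Rp op a x = op x a.
Proof.
case: loopQ => _ _ _ injR.
have -> : Rp op a = perm (injR a) by apply: RpE_perm => y; rewrite permE.
by rewrite permE.
Qed.

Lemma LpE a x : Lp op a x = op a x.
Proof.
case: loopQ => _ _ injL _.
have -> : Lp op a = perm (injL a) by apply: LpE_perm => y; rewrite permE.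
by rewrite permE.
Qed.

End Translations.

Section LoopIsomorphism.
Variables (T S : finType) (op : T -> T -> T) (opS : S -> S -> S) (e : T).
Variables (f : T -> S) (g : S -> T).
Hypotheses (fK : cancel f g) (gK : cancel g f).
Hypothesis fM : {morph f : x y / op x y >-> opS x y}.
Hypothesis loopQ : is_loop op e.

Lemma iso_perm_inj (p : {perm T}) : injective (f \o p \o g).
Proof. by move=> s t /(can_inj fK) /perm_inj /(can_inj gK). Qed.

Definition iso_perm (p : {perm T}) : {perm S} := perm (@iso_perm_inj p).

Lemma iso_permE p s : iso_perm p s = f (p (g s)).
Proof. by rewrite permE. Qed.

Lemma iso_permM : {in [set: {perm T}] &, {morph iso_perm : p q / p * q}}.
Proof. by move=> p q _ _; apply/permP => s; rewrite permM !iso_permE fK permM. Qed.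

Canonical iso_morphism := Morphism iso_permM.

Lemma iso_Rp a : Rp opS (f a) = iso_perm (Rp op a).
Proof. by apply: RpE_perm => s; rewrite iso_permE (RpE loopQ) fM gK. Qed.

Lemma iso_Lp a : Lp opS (f a) = iso_perm (Lp op a).
Proof. by apply: LpE_perm => s; rewrite iso_permE (LpE loopQ) fM gK. Qed.

Lemma iso_translations (transl : forall (X : finType), (X -> X -> X) -> X -> {perm X}) :
  (forall a, transl S opS (f a) = iso_perm (transl T op a)) ->
  [set transl S opS b | b : S] = iso_perm @: [set transl T op a | a : T].
Proof.
move=> isoE; rewrite -imset_comp; apply/setP => p; apply/imsetP/imsetP.
  by case=> b _ ->; exists (g b); rewrite //= -isoE gK.
by case=> a _ ->; exists (f a); rewrite //= isoE.
Qed.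

Lemma iso_Mlt : Mlt opS = iso_morphism @* Mlt op.
Proof.
rewrite /Mlt morphim_gen ?subsetT // morphimEsub ?subsetT // imsetU.
by rewrite (iso_translations iso_Rp) (iso_translations iso_Lp).
Qed.

Lemma iso_Inn : Inn opS (f e) = iso_perm @: Inn op e.
Proof.
apply/setP => p; rewrite inE iso_Mlt morphimEsub ?subsetT //.
apply/andP/imsetP.
- case=> /imsetP[q Mq ->]; rewrite iso_permE fK => /eqP/(can_inj fK) qe.
  by exists q; rewrite // inE Mq qe eqxx.
- case=> q /[dup] /Inn_fix qe; rewrite inE => /andP[Mq _] ->.
  by rewrite imset_f // iso_permE fK qe.
Qed.

End LoopIsomorphism.

Section RegularNormalSubgroup.
Variables (T : finType) (op : T -> T -> T) (e : T) (U : {group {perm T}}).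
Hypothesis loopQ : is_loop op e.
Hypothesis nUM : U <| Mlt op.
Hypothesis transU : [transitive U, on [set: T] | 'P].
Hypothesis regU : forall u, u \in U -> u e = e -> u = 1.

Local Notation h_of := (h_of op e U).
Local Notation u_of := (u_of op e U).

Lemma regular_inj u v : u \in U -> v \in U -> u e = v e -> u = v.
Proof.
move=> Uu Uv uv_e; apply/eqP; rewrite eq_mulgV1; apply/eqP/regU.
  by rewrite groupM ?groupV.
by rewrite permM uv_e -permM mulgV perm1.
Qed.

Lemma regular_ex x : exists2 u, u \in U & u e = x.
Proof. by have [u Uu ->] := atransP2 transU (in_setT e) (in_setT x); exists u. Qed.

Lemma conj_Inn_mem u h : u \in U -> h \in Inn op e -> u ^ h \in U.
Proof.
move=> Uu Ih; rewrite memJ_norm // (subsetP (normal_norm nUM)) //.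
exact: (subsetP (Inn_sub_Mlt op e)).
Qed.

Lemma conj_Inn_fix u h : h \in Inn op e -> (u ^ h) e = h (u e).
Proof.
move=> Ih; have hVe : h^-1 e = e by rewrite -{1}(Inn_fix Ih) -permM mulgV perm1.
by rewrite conjgE !permM hVe.
Qed.

Lemma Rp_decomp_ex x :
  exists h, exists u, [/\ h \in Inn op e, u \in U & Rp op x = h * u].
Proof.
have [u Uu ue] := regular_ex x.
exists (Rp op x * u^-1), u; split; rewrite ?mulgKV //.
have MU := subsetP (normal_sub nUM).
case: loopQ => mul1 _ _ _.
by rewrite inE groupM ?groupV ?Rp_Mlt ?MU //= permM (RpE loopQ) mul1 -ue -permM mulgV perm1.
Qed.

Lemma Rp_decomp_fix h u x :
  h \in Inn op e -> u \in U -> Rp op x = h * u -> u e = x.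
Proof.
move=> Ih Uu Rx; case: loopQ => mul1 _ _ _.
by rewrite -(Inn_fix Ih) -permM -Rx (RpE loopQ) mul1.
Qed.

Lemma u_of_spec x :
  u_of x \in U /\ exists2 h, h \in Inn op e & Rp op x = h * u_of x.
Proof.
rewrite /Defs.u_of; case: pickP => [u /andP[Uu /existsP[h /andP[Ih /eqP Rx]]] | no_u].
  by split; last exists h.
have [h [u [Ih Uu Rx]]] := Rp_decomp_ex x.
by move: (no_u u); rewrite Uu => /negbT/existsPn/(_ h); rewrite Ih Rx eqxx.
Qed.

Lemma u_of_mem x : u_of x \in U.
Proof. by case: (u_of_spec x). Qed.

Lemma u_of_fix x : u_of x e = x.
Proof. by have [Uu [h Ih Rx]] := u_of_spec x; apply: Rp_decomp_fix Rx. Qed.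

Lemma u_ofE u x : u \in U -> u e = x -> u_of x = u.
Proof. by move=> Uu ue; apply: regular_inj; rewrite ?u_of_mem ?u_of_fix. Qed.

Lemma h_of_spec x : h_of x \in Inn op e /\ Rp op x = h_of x * u_of x.
Proof.
rewrite /Defs.h_of; case: pickP => [h /andP[Ih /existsP[u /andP[Uu /eqP Rx]]] | no_h].
  by rewrite Rx (u_ofE Uu (Rp_decomp_fix Ih Uu Rx)).
have [h [u [Ih Uu Rx]]] := Rp_decomp_ex x.
by move: (no_h h); rewrite Ih => /negbT/existsPn/(_ u); rewrite Uu Rx eqxx.
Qed.

Lemma h_of_Inn x : h_of x \in Inn op e.
Proof. by case: (h_of_spec x). Qed.

Lemma Rp_hu x : Rp op x = h_of x * u_of x.
Proof. by case: (h_of_spec x). Qed.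

Lemma h_UE u : u \in U -> h_U op e U u = h_of (u e).
Proof.
move=> Uu; rewrite /h_U; case: pickP => [x /eqP <- | /(_ (u e))].
  by rewrite u_of_fix.
by rewrite (u_ofE Uu) ?eqxx.
Qed.

Definition u_sub (x : T) : subg_of U := subg U (u_of x).
Definition u_point (u : subg_of U) : T := sgval u e.

Lemma u_subK : cancel u_sub u_point.
Proof. by move=> x; rewrite /u_point subgK ?u_of_mem ?u_of_fix. Qed.

Lemma u_pointK : cancel u_point u_sub.
Proof. by move=> u; rewrite /u_sub (u_ofE (subgP u) erefl) sgvalK. Qed.

Lemma u_sub_e : u_sub e = 1.
Proof.
by apply: val_inj; rewrite /= subgK ?u_of_mem //; apply: u_ofE; rewrite ?perm1.
Qed.

(* x R_y = (1 u_x) h_y u_y = (1 u_x^{h_y}) u_y, as h_y fixes 1. *)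
Lemma u_subM : {morph u_sub : x y / op x y >-> @opU T op e U x y}.
Proof.
move=> x y; rewrite /opU /u_sub !subgK ?u_of_mem // h_UE ?u_of_mem // u_of_fix.
congr (subg U _); apply: u_ofE.
  by rewrite groupM ?u_of_mem // conj_Inn_mem ?u_of_mem ?h_of_Inn.
by rewrite permM conj_Inn_fix ?h_of_Inn // u_of_fix -permM -Rp_hu (RpE loopQ).
Qed.

Lemma iso_perm_conj h u : h \in Inn op e ->
  sgval (iso_perm u_subK u_pointK h u) = sgval u ^ h.
Proof.
move=> Ih; rewrite iso_permE /u_sub subgK ?u_of_mem //.
by apply: u_ofE; rewrite ?conj_Inn_mem ?subgP ?conj_Inn_fix.
Qed.

Lemma Inn_opU :
  Inn (@opU T op e U) 1 =
    [set p : {perm (subg_of U)} |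
       [exists h in Inn op e, [forall u, sgval (p u) == sgval u ^ h]]].
Proof.
rewrite -u_sub_e (iso_Inn u_subK u_pointK u_subM loopQ).
apply/setP => p; rewrite inE; apply/imsetP/existsP.
  case=> h Ih ->; exists h; rewrite Ih /=; apply/forallP => u.
  exact/eqP/iso_perm_conj.
case=> h /andP[Ih /forallP pE]; exists h => //; apply/permP => u.
by apply: val_inj; rewrite /= (eqP (pE u)); symmetry; apply: iso_perm_conj.
Qed.

Hypothesis commQ : loop_comm op.

Lemma Mlt_sub_h_of_U : Mlt op \subset << [set h_of x | x : T] >> <*> U.
Proof.
set H := << _ >>.
have LR a : Lp op a = Rp op a.
  by apply/permP => x; rewrite (LpE loopQ) (RpE loopQ) commQ.
have HUR a : Rp op a \in H <*> U.
  rewrite Rp_hu groupM //; first by rewrite mem_gen // inE mem_gen ?imset_f.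
  by rewrite (subsetP (joing_subr _ _)) ?u_of_mem.
rewrite [Mlt op]/Mlt gen_subG; apply/subsetP => p; rewrite inE.
by case/orP=> /imsetP[a _ ->]; rewrite ?LR HUR.
Qed.

Lemma Inn_gen_h_of : Inn op e = << [set h_of x | x : T] >>.
Proof.
set H := << _ >>.
have sHI : H \subset Inn op e.
  by rewrite gen_subG; apply/subsetP => _ /imsetP[x _ ->]; apply: h_of_Inn.
have nUH : H \subset 'N(U).
  by rewrite (subset_trans sHI) // (subset_trans (Inn_sub_Mlt op e)) ?normal_norm.
apply/eqP; rewrite eqEsubset sHI andbT; apply/subsetP => p Ip.
have Mp := subsetP (Inn_sub_Mlt op e) p Ip.
have := subsetP Mlt_sub_h_of_U p Mp; rewrite norm_joinEl //.
case/mulsgP=> k u Hk Uu pE; suff u1 : u = 1 by rewrite pE u1 mulg1.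
apply: regU => //; move: (Inn_fix Ip); rewrite pE permM.
by rewrite (Inn_fix (subsetP sHI k Hk)).
Qed.

End RegularNormalSubgroup.

Theorem lemma4p1 (T : finType) (op : T -> T -> T) (e : T)
  (U : {group {perm T}}) :
  is_loop op e -> loop_simple op e -> loop_comm op ->
  loop_automorphic op e -> loop_exp2 op e -> ~ loop_assoc op ->
  U :=: socle (Mlt op) ->
  U <| Mlt op -> 2.-abelem U -> [transitive U, on [set: T] | 'P] ->
  (forall u, u \in U -> u e = e -> u = 1) ->
  Inn (@opU T op e U) 1 =
    [set p : {perm (subg_of U)} |
       [exists h in Inn op e, [forall u, sgval (p u) == sgval u ^ h]]]
  /\ Inn op e = << [set h_of op e U x | x : T] >>.
Proof.
move=> loopQ _ commQ _ _ _ _ nUM _ transU regU.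
split; first exact: Inn_opU.
exact: Inn_gen_h_of.
Qed.
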